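(* Let $\Omega\subset\mathbb{R}^3$ be a connected bounded open set with $C^2$ boundary and let $0<d<\min\{1,\delta\}$, where $\delta=\delta(\Omega)$ is as in the context. Then $\Omega\setminus\Omega_{d/8}$ is pathwise connected: for any $x'_1,x'_2\in\Omega\setminus\Omega_{d/8}$ there is a continuous curve in $\Omega\setminus\Omega_{d/8}$ joining $x'_1$ and $x'_2$.
   Context: $\Omega_\epsilon:=\{x\in\Omega:d(x,\partial\Omega)<\epsilon\}$. $\delta(\Omega)>0$ is a number such that for each $0<d<\min\{1,\delta\}$ there are $x_1^0,\dots,x_{m_1}^0\in\partial\Omega$ with $\partial\Omega\subset\bigcup_iB(x_i^0,d/8)$ and, for each $i$, an orthonormal basis $\{e_i^1,e_i^2,-n(x_i^0)\}$ ($n$ the outward unit normal) and a $C^2$ function $\phi_i:\mathbb{R}^2\to\mathbb{R}$, $\phi_i(0)=0$, $\nabla\phi_i(0)=0$, $|\nabla\phi_i|<\frac1{100}$, such that inside $B(x_i^0,3d)$ (open and closed) $\partial\Omega$ is the graph $\{x_i^0+u_1e_i^1+u_2e_i^2-\phi_i(u_1,u_2)n(x_i^0)\}$ and $\Omega$ is the region $u_3>\phi_i(u_1,u_2)$ in coordinates $x_i^0+u_1e_i^1+u_2e_i^2-u_3n(x_i^0)$, and $B(x_i^0-\frac d2n(x_i^0),\frac d2)\subset B(x_i^0,d)\cap\Omega$. *)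

From Stdlib Require Import Reals Lra.
From Coquelicot Require Import Coquelicot.
Open Scope R_scope.

Record vec3 := mk3 { c1 : R; c2 : R; c3 : R }.

Definition vadd (u v : vec3) : vec3 := mk3 (c1 u + c1 v) (c2 u + c2 v) (c3 u + c3 v).
Definition vscal (a : R) (u : vec3) : vec3 := mk3 (a * c1 u) (a * c2 u) (a * c3 u).
Definition vopp (u : vec3) : vec3 := vscal (-1) u.
Definition vsub (u v : vec3) : vec3 := vadd u (vopp v).
Definition vdot (u v : vec3) : R := c1 u * c1 v + c2 u * c2 v + c3 u * c3 v.
Definition vnorm (u : vec3) : R := sqrt (vdot u u).
Definition vdist (x y : vec3) : R := vnorm (vsub x y).

Definition set3 := vec3 -> Prop.

Definition oball (c : vec3) (r : R) : set3 := fun x => vdist x c < r.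
Definition cball (c : vec3) (r : R) : set3 := fun x => vdist x c <= r.

Definition open3 (A : set3) : Prop :=
  forall x, A x -> exists r, 0 < r /\ forall y, vdist y x < r -> A y.

Definition bounded3 (A : set3) : Prop :=
  exists M, forall x, A x -> vnorm x <= M.

Definition connected3 (A : set3) : Prop :=
  ~ (exists U V : set3, open3 U /\ open3 V /\
       (forall x, A x -> U x \/ V x) /\
       (exists x, A x /\ U x) /\ (exists x, A x /\ V x) /\
       (forall x, A x -> U x -> V x -> False)).

Definition bdry (A : set3) : set3 := fun x =>
  forall r, 0 < r ->
    (exists y, A y /\ vdist x y < r) /\ (exists y, ~ A y /\ vdist x y < r).

(** Omega_eps = { x in Omega : d(x, dOmega) < eps };
    d(x,dOmega) = inf_{y in dOmega} |x-y| < eps  iff  some y in dOmega has |x-y| < eps *)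
Definition near_bdry (Om : set3) (eps : R) : set3 := fun x =>
  Om x /\ exists y, bdry Om y /\ vdist x y < eps.

Definition D1 (f : R -> R -> R) : R -> R -> R := fun x y => Derive (fun t => f t y) x.
Definition D2 (f : R -> R -> R) : R -> R -> R := fun x y => Derive (fun t => f x t) y.

Definition cont2 (g : R -> R -> R) : Prop :=
  forall x y eps, 0 < eps -> exists eta, 0 < eta /\
    forall x' y', Rabs (x' - x) < eta -> Rabs (y' - y) < eta ->
      Rabs (g x' y' - g x y) < eps.

Definition has_partials (f : R -> R -> R) : Prop :=
  forall x y, ex_derive (fun t => f t y) x /\ ex_derive (fun t => f x t) y.

Definition C1_2 (f : R -> R -> R) : Prop :=
  cont2 f /\ has_partials f /\ cont2 (D1 f) /\ cont2 (D2 f).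

Definition C2_2 (f : R -> R -> R) : Prop :=
  C1_2 f /\ C1_2 (D1 f) /\ C1_2 (D2 f).

Definition orthonormal3 (a b c : vec3) : Prop :=
  vdot a a = 1 /\ vdot b b = 1 /\ vdot c c = 1 /\
  vdot a b = 0 /\ vdot a c = 0 /\ vdot b c = 0.

Definition lpt (x0 e1 e2 nu : vec3) (u1 u2 u3 : R) : vec3 :=
  vadd x0 (vadd (vscal u1 e1) (vadd (vscal u2 e2) (vscal (- u3) nu))).

Definition graph_in (Om : set3) (B : set3) (x0 e1 e2 nu : vec3)
    (phi : R -> R -> R) : Prop :=
  (forall x, B x ->
     (bdry Om x <-> exists u1 u2, x = lpt x0 e1 e2 nu u1 u2 (phi u1 u2))) /\
  (forall x, B x ->
     (Om x <-> exists u1 u2 u3, x = lpt x0 e1 e2 nu u1 u2 u3 /\ phi u1 u2 < u3)).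

Definition C2_boundary (Om : set3) : Prop :=
  forall x0, bdry Om x0 ->
    exists r (e1 e2 nu : vec3) (phi : R -> R -> R),
      0 < r /\ orthonormal3 e1 e2 (vopp nu) /\ C2_2 phi /\
      graph_in Om (oball x0 r) x0 e1 e2 nu phi.

(** The covering property defining delta(Omega), for a given d.
    nu i plays the role of the outward unit normal n(x_i^0). *)
Definition local_chart_cover (Om : set3) (d : R) : Prop :=
  exists (m1 : nat) (x0 e1 e2 nu : nat -> vec3) (phi : nat -> R -> R -> R),
    (forall i, (i < m1)%nat -> bdry Om (x0 i)) /\
    (forall y, bdry Om y -> exists i, (i < m1)%nat /\ oball (x0 i) (d / 8) y) /\
    (forall i, (i < m1)%nat ->
       orthonormal3 (e1 i) (e2 i) (vopp (nu i)) /\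
       C2_2 (phi i) /\
       phi i 0 0 = 0 /\ D1 (phi i) 0 0 = 0 /\ D2 (phi i) 0 0 = 0 /\
       (forall u1 u2, sqrt (D1 (phi i) u1 u2 ^ 2 + D2 (phi i) u1 u2 ^ 2) < 1 / 100) /\
       graph_in Om (oball (x0 i) (3 * d)) (x0 i) (e1 i) (e2 i) (nu i) (phi i) /\
       graph_in Om (cball (x0 i) (3 * d)) (x0 i) (e1 i) (e2 i) (nu i) (phi i) /\
       (forall x, oball (vsub (x0 i) (vscal (d / 2) (nu i))) (d / 2) x ->
          oball (x0 i) d x /\ Om x)).

Definition is_delta (Om : set3) (delta : R) : Prop :=
  0 < delta /\ forall d, 0 < d -> d < Rmin 1 delta -> local_chart_cover Om d.

Definition cont_curve (g : R -> vec3) : Prop :=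
  forall t, 0 <= t <= 1 -> forall eps, 0 < eps -> exists eta, 0 < eta /\
    forall s, 0 <= s <= 1 -> Rabs (s - t) < eta -> vdist (g s) (g t) < eps.

Definition path_connected (A : set3) : Prop :=
  forall x1 x2, A x1 -> A x2 ->
    exists g : R -> vec3, cont_curve g /\ g 0 = x1 /\ g 1 = x2 /\
      (forall t, 0 <= t <= 1 -> A (g t)).

From Stdlib Require Import Reals Lra Classical.
From Coquelicot Require Import Coquelicot.
Open Scope R_scope.

(* Write K for Omega minus Omega_{d/8}.  In a chart around x_i^0 the slope of phi_i is
   below 1/100, so a point at height at least d/7 above the graph is in K, and moving a
   point of K upwards keeps it in K.  Hence every point of Omega is within d/7 of K, and
   two points of K at distance < 2d/7 are joined inside K: either the segment between
   them stays away from the boundary, or both lie in one ball B(x_i^0, d), where each can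
   climb to height d and slide horizontally to the point at height d over x_i^0.  The
   d/7-neighbourhoods of the path component of x_1 in K and of the rest of K are then
   open, cover Omega and are disjoint on Omega, so connectedness of Omega forces the
   component to be all of K. *)

Ltac vec_ring :=
  repeat match goal with v : vec3 |- _ => destruct v end;
  unfold lpt, vsub, vopp, vadd, vscal, vdot; simpl; first [ring | f_equal; ring].

Lemma vdot_ge0 u : 0 <= vdot u u.
Proof. destruct u; unfold vdot; simpl; nra. Qed.

Lemma vdot_Cauchy_Schwarz u v : vdot u v * vdot u v <= vdot u u * vdot v v.
Proof.
  destruct u as [a1 a2 a3], v as [b1 b2 b3]; unfold vdot; simpl.
  assert (E : (a1*a1+a2*a2+a3*a3)*(b1*b1+b2*b2+b3*b3)
              - (a1*b1+a2*b2+a3*b3)*(a1*b1+a2*b2+a3*b3)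
            = (a1*b2-a2*b1)^2 + (a1*b3-a3*b1)^2 + (a2*b3-a3*b2)^2) by ring.
  pose proof (pow2_ge_0 (a1*b2-a2*b1)); pose proof (pow2_ge_0 (a1*b3-a3*b1));
  pose proof (pow2_ge_0 (a2*b3-a3*b2)).
  lra.
Qed.

Lemma vdist_ge0 x y : 0 <= vdist x y.
Proof. apply sqrt_pos. Qed.

Lemma vdist_sym x y : vdist x y = vdist y x.
Proof. unfold vdist, vnorm; f_equal; vec_ring. Qed.

Lemma vdist_xx x : vdist x x = 0.
Proof.
  unfold vdist, vnorm.
  replace (vdot (vsub x x) (vsub x x)) with 0 by vec_ring.
  apply sqrt_0.
Qed.

Lemma vnorm_triangle a b : vnorm (vadd a b) <= vnorm a + vnorm b.
Proof.
  unfold vnorm.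
  pose proof (vdot_ge0 (vadd a b)) as Hab0.
  assert (E : vdot (vadd a b) (vadd a b) = vdot a a + vdot b b + 2 * vdot a b)
    by vec_ring.
  rewrite E in Hab0 |- *.
  pose proof (sqrt_sqrt _ (vdot_ge0 a)) as Sa; pose proof (sqrt_sqrt _ (vdot_ge0 b)) as Sb.
  pose proof (sqrt_pos (vdot a a)); pose proof (sqrt_pos (vdot b b)).
  pose proof (vdot_Cauchy_Schwarz a b) as CS.
  set (sa := sqrt (vdot a a)) in *; set (sb := sqrt (vdot b b)) in *.
  assert (Hab : vdot a b <= sa * sb).
  { apply Rsqr_incr_0_var; [|apply Rmult_le_pos; assumption].
    unfold Rsqr. replace (sa * sb * (sa * sb)) with (sa * sa * (sb * sb)) by ring.
    rewrite Sa, Sb. exact CS. }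
  apply Rsqr_incr_0_var; [|lra].
  unfold Rsqr; rewrite sqrt_sqrt by exact Hab0.
  rewrite <- Sa, <- Sb. lra.
Qed.

Lemma vdist_triangle x y z : vdist x z <= vdist x y + vdist y z.
Proof.
  unfold vdist.
  replace (vsub x z) with (vadd (vsub x y) (vsub y z)) by vec_ring.
  apply vnorm_triangle.
Qed.

Lemma vdist_lt_sqr x y r :
  0 < r -> vdist x y < r <-> vdot (vsub x y) (vsub x y) < r * r.
Proof.
  intro Hr; unfold vdist, vnorm.
  pose proof (vdot_ge0 (vsub x y)) as H0.
  pose proof (sqrt_sqrt _ H0); pose proof (sqrt_pos (vdot (vsub x y) (vsub x y))).
  split; intro Hlt; nra.
Qed.

Definition seg (p q : vec3) (l : R) : vec3 := vadd p (vscal l (vsub q p)).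

Lemma seg0 p q : seg p q 0 = p.
Proof. unfold seg; vec_ring. Qed.

Lemma seg1 p q : seg p q 1 = q.
Proof. unfold seg; vec_ring. Qed.

Lemma vdist_seg p q a b : vdist (seg p q a) (seg p q b) = Rabs (a - b) * vdist q p.
Proof.
  unfold vdist, vnorm.
  replace (vdot (vsub (seg p q a) (seg p q b)) (vsub (seg p q a) (seg p q b)))
    with ((a - b) * (a - b) * vdot (vsub q p) (vsub q p)) by (unfold seg; vec_ring).
  rewrite sqrt_mult_alt by apply Rle_0_sqr.
  now rewrite <- sqrt_Rsqr_abs.
Qed.

Lemma vdist_seg_lt p q a b r :
  Rabs (a - b) < r / (vdist q p + 1) -> vdist (seg p q a) (seg p q b) < r.
Proof.
  intro Hab. rewrite vdist_seg.
  pose proof (vdist_ge0 q p). pose proof (Rabs_pos (a - b)).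
  assert (Hr : 0 < r / (vdist q p + 1)) by lra.
  apply Rmult_lt_compat_r with (r := vdist q p + 1) in Hab; [|lra].
  replace (r / (vdist q p + 1) * (vdist q p + 1)) with r in Hab by (field; lra).
  nra.
Qed.

Lemma vdist_seg_le p q l : 0 <= l <= 1 -> vdist p (seg p q l) <= vdist p q.
Proof.
  intro Hl. rewrite <- (seg0 p q) at 1. rewrite vdist_seg, vdist_sym.
  rewrite Rabs_left1 by lra. pose proof (vdist_ge0 p q). nra.
Qed.

Definition cont_on (a b : R) (g : R -> vec3) : Prop :=
  forall t, a <= t <= b -> forall eps, 0 < eps -> exists eta, 0 < eta /\
    forall s, a <= s <= b -> Rabs (s - t) < eta -> vdist (g s) (g t) < eps.

Lemma cont_on_ext a b g h :
  (forall t, a <= t <= b -> g t = h t) -> cont_on a b g -> cont_on a b h.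
Proof.
  intros Egh Hg t Ht eps Heps.
  destruct (Hg t Ht eps Heps) as [eta [Heta Hs]].
  exists eta; split; [exact Heta|]. intros s Hs1 Hs2.
  rewrite <- !Egh by assumption. now apply Hs.
Qed.

Lemma cont_on_affine a b a' b' k c g :
  (forall t, a' <= t <= b' -> a <= k * t + c <= b) ->
  cont_on a b g -> cont_on a' b' (fun t => g (k * t + c)).
Proof.
  intros Hmaps Hg t Ht eps Heps.
  destruct (Hg (k * t + c) (Hmaps t Ht) eps Heps) as [eta [Heta Hs]].
  exists (eta / (Rabs k + 1)).
  pose proof (Rabs_pos k).
  split; [apply Rdiv_lt_0_compat; lra|]. intros s Hs1 Hs2.
  apply Hs; [now apply Hmaps|].
  replace (k * s + c - (k * t + c)) with (k * (s - t)) by ring.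
  rewrite Rabs_mult. pose proof (Rabs_pos (s - t)).
  apply Rmult_lt_compat_r with (r := Rabs k + 1) in Hs2; [|lra].
  replace (eta / (Rabs k + 1) * (Rabs k + 1)) with eta in Hs2 by (field; lra).
  nra.
Qed.

(* Vacuous when [t] lies outside [a, m]: then [eta] is the distance to the interval. *)
Lemma cont_on_near a m g t eps :
  cont_on a m g -> 0 < eps -> exists eta, 0 < eta /\
    forall s, a <= s <= m -> Rabs (s - t) < eta -> vdist (g s) (g t) < eps.
Proof.
  intros Hg Heps.
  destruct (Rlt_le_dec t a) as [Hta|Hat]; [|destruct (Rlt_le_dec m t) as [Hmt|Htm]].
  - exists (a - t); split; [lra|]. intros s Hs Hst.
    apply Rabs_def2 in Hst. lra.
  - exists (t - m); split; [lra|]. intros s Hs Hst.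
    apply Rabs_def2 in Hst. lra.
  - now apply Hg.
Qed.

Lemma cont_on_paste a m b g : cont_on a m g -> cont_on m b g -> cont_on a b g.
Proof.
  intros Hl Hr t Ht eps Heps.
  destruct (cont_on_near a m g t eps Hl Heps) as [eta1 [Heta1 H1]].
  destruct (cont_on_near m b g t eps Hr Heps) as [eta2 [Heta2 H2]].
  exists (Rmin eta1 eta2); split; [now apply Rmin_glb_lt|]. intros s Hs Hst.
  pose proof (Rmin_l eta1 eta2); pose proof (Rmin_r eta1 eta2).
  destruct (Rle_lt_dec s m).
  - apply H1; lra.
  - apply H2; lra.
Qed.

Lemma cont_on_seg a b p q : cont_on a b (seg p q).
Proof.
  intros t _ eps Heps. pose proof (vdist_ge0 q p).
  exists (eps / (vdist q p + 1)); split; [apply Rdiv_lt_0_compat; lra|].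
  intros s _ Hst. now apply vdist_seg_lt.
Qed.

Definition joined (A : set3) (x y : vec3) : Prop :=
  exists g : R -> vec3, cont_curve g /\ g 0 = x /\ g 1 = y /\
    (forall t, 0 <= t <= 1 -> A (g t)).

Lemma joined_refl A x : A x -> joined A x x.
Proof.
  intro Ax. exists (fun _ => x). repeat split; auto.
  intros t _ eps Heps. exists 1. split; [lra|]. intros. now rewrite vdist_xx.
Qed.

Lemma joined_sym A x y : joined A x y -> joined A y x.
Proof.
  intros [g [Hg [g0 [g1 HA]]]].
  exists (fun t => g (-1 * t + 1)). repeat split.
  - apply (cont_on_affine 0 1); [intros; lra | exact Hg].
  - now replace (-1 * 0 + 1) with 1 by ring.
  - now replace (-1 * 1 + 1) with 0 by ring.
  - intros t Ht. apply HA. lra.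
Qed.

Lemma joined_trans A x y z : joined A x y -> joined A y z -> joined A x z.
Proof.
  intros [g1 [Hg1 [g10 [g11 HA1]]]] [g2 [Hg2 [g20 [g21 HA2]]]].
  set (h t := if Rle_dec t (1 / 2) then g1 (2 * t + 0) else g2 (2 * t + -1)).
  exists h. repeat split.
  - apply (cont_on_paste 0 (1 / 2)).
    + apply (cont_on_ext _ _ (fun t => g1 (2 * t + 0))).
      { intros t Ht. unfold h. destruct (Rle_dec t (1 / 2)); [reflexivity | lra]. }
      apply (cont_on_affine 0 1); [intros; lra | exact Hg1].
    + apply (cont_on_ext _ _ (fun t => g2 (2 * t + -1))).
      { intros t Ht. unfold h. destruct (Rle_dec t (1 / 2)); [|reflexivity].
        replace t with (1 / 2) by lra.
        replace (2 * (1 / 2) + 0) with 1 by field. replace (2 * (1 / 2) + -1) with 0 by field.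
        congruence. }
      apply (cont_on_affine 0 1); [intros; lra | exact Hg2].
  - unfold h. destruct (Rle_dec 0 (1 / 2)); [|lra].
    now replace (2 * 0 + 0) with 0 by ring.
  - unfold h. destruct (Rle_dec 1 (1 / 2)); [lra|].
    now replace (2 * 1 + -1) with 1 by ring.
  - intros t Ht. unfold h. destruct (Rle_dec t (1 / 2)); [apply HA1 | apply HA2]; lra.
Qed.

Lemma joined_seg A p q : (forall l, 0 <= l <= 1 -> A (seg p q l)) -> joined A p q.
Proof.
  intro HA. exists (seg p q). repeat split; auto using seg0, seg1.
  apply cont_on_seg.
Qed.

Lemma interval_frontier (P : R -> Prop) : P 0 -> ~ P 1 ->
  exists m, 0 <= m <= 1 /\ forall r, 0 < r ->
    (exists l, 0 <= l <= 1 /\ Rabs (l - m) < r /\ P l) /\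
    (exists l, 0 <= l <= 1 /\ Rabs (l - m) < r /\ ~ P l).
Proof.
  intros P0 nP1.
  set (E l := 0 <= l <= 1 /\ forall mu, 0 <= mu <= l -> P mu).
  assert (E0 : E 0).
  { split; [lra|]. intros mu Hmu. now replace mu with 0 by lra. }
  destruct (completeness E) as [m [Hub Hlub]].
  { exists 1. intros l [Hl _]. lra. }
  { exists 0. exact E0. }
  assert (Hm : 0 <= m <= 1).
  { split; [now apply Hub|]. apply Hlub. intros l [Hl _]. lra. }
  assert (Happrox : forall r, 0 < r -> exists e, E e /\ m - r < e).
  { intros r Hr. apply NNPP. intro Hno.
    assert (m <= m - r); [|lra].
    apply Hlub. intros l El. apply Rnot_lt_le. intro. apply Hno. eauto. }
  assert (HPm : forall mu, 0 <= mu < m -> P mu).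
  { intros mu Hmu. destruct (Happrox (m - mu)) as [e [[_ He] Hme]]; [lra|].
    apply He. lra. }
  exists m. split; [exact Hm|]. intros r Hr. split.
  - destruct (Happrox r Hr) as [e [[He HPe] Hme]].
    assert (e <= m) by (apply Hub; split; assumption).
    exists e. split; [exact He|]. split; [apply Rabs_def1; lra|]. apply HPe. lra.
  - apply NNPP. intro Hno.
    assert (Hnear : forall l, 0 <= l <= 1 -> Rabs (l - m) < r -> P l).
    { intros l Hl Hlm. apply NNPP. intro. apply Hno. eauto. }
    destruct (Req_dec m 1) as [Hm1|Hm1].
    { apply nP1, Hnear; [lra|]. rewrite Hm1, Rminus_eq_0, Rabs_R0. exact Hr. }
    assert (Hm' : E (Rmin 1 (m + r / 2))).
    { pose proof (Rmin_l 1 (m + r / 2)); pose proof (Rmin_r 1 (m + r / 2)).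
      split; [split; [apply Rmin_glb|]; lra|].
      intros mu Hmu. destruct (Rlt_le_dec mu m); [apply HPm; lra|].
      apply Hnear; [lra|]. apply Rabs_def1; lra. }
    pose proof (Hub _ Hm'). unfold Rmin in *. destruct Rle_dec; lra.
Qed.

Lemma seg_meets_bdry (A : set3) p q :
  A p -> ~ A q -> exists l, 0 <= l <= 1 /\ bdry A (seg p q l).
Proof.
  intros Ap nAq.
  destruct (interval_frontier (fun l => A (seg p q l))) as [m [Hm Hfr]].
  { now rewrite seg0. }
  { now rewrite seg1. }
  exists m. split; [exact Hm|]. intros r Hr.
  pose proof (vdist_ge0 q p).
  assert (Hr' : 0 < r / (vdist q p + 1)) by (apply Rdiv_lt_0_compat; lra).
  assert (Hclose : forall l, Rabs (l - m) < r / (vdist q p + 1) ->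
                     vdist (seg p q m) (seg p q l) < r)
    by (intros l Hl; rewrite vdist_sym; now apply vdist_seg_lt).
  destruct (Hfr _ Hr') as [[l [_ [Hl Al]]] [l' [_ [Hl' nAl']]]].
  split; eexists; split; eauto.
Qed.

Lemma lipschitz_of_partials_bound (f : R -> R -> R) L :
  has_partials f ->
  (forall u1 u2, sqrt (D1 f u1 u2 ^ 2 + D2 f u1 u2 ^ 2) <= L) ->
  forall a1 a2 b1 b2, Rabs (f a1 a2 - f b1 b2) <= L * (Rabs (a1 - b1) + Rabs (a2 - b2)).
Proof.
  intros Hf Hgrad a1 a2 b1 b2.
  assert (HD1 : forall x y, Rabs (D1 f x y) <= L).
  { intros x y. eapply Rle_trans; [|apply (Hgrad x y)].
    rewrite <- sqrt_Rsqr_abs. apply sqrt_le_1_alt.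
    pose proof (pow2_ge_0 (D2 f x y)). unfold Rsqr. lra. }
  assert (HD2 : forall x y, Rabs (D2 f x y) <= L).
  { intros x y. eapply Rle_trans; [|apply (Hgrad x y)].
    rewrite <- sqrt_Rsqr_abs. apply sqrt_le_1_alt.
    pose proof (pow2_ge_0 (D1 f x y)). unfold Rsqr. lra. }
  assert (E1 : Rabs (f a1 a2 - f b1 a2) <= L * Rabs (a1 - b1)).
  { apply (bounded_variation (fun t => f t a2) (fun t => D1 f t a2)).
    intros t _. split; [|apply HD1]. apply Derive_correct, (Hf t a2). }
  assert (E2 : Rabs (f b1 a2 - f b1 b2) <= L * Rabs (a2 - b2)).
  { apply (bounded_variation (fun t => f b1 t) (fun t => D2 f b1 t)).
    intros t _. split; [|apply HD2]. apply Derive_correct, (Hf b1 t). }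
  replace (f a1 a2 - f b1 b2) with ((f a1 a2 - f b1 a2) + (f b1 a2 - f b1 b2)) by ring.
  eapply Rle_trans; [apply Rabs_triang|]. lra.
Qed.

Lemma Rabs_lt_of_sqr_lt x r : 0 <= r -> x ^ 2 < r * r -> Rabs x < r.
Proof.
  intros Hr Hx. rewrite <- pow2_abs in Hx.
  destruct (Rlt_le_dec (Rabs x) r) as [|Hle]; [assumption|]. nra.
Qed.

Lemma lpt_origin x0 e1 e2 nu : lpt x0 e1 e2 nu 0 0 0 = x0.
Proof. vec_ring. Qed.

Lemma seg_lpt x0 e1 e2 nu a1 a2 a3 b1 b2 b3 l :
  seg (lpt x0 e1 e2 nu a1 a2 a3) (lpt x0 e1 e2 nu b1 b2 b3) l =
  lpt x0 e1 e2 nu (a1 + l * (b1 - a1)) (a2 + l * (b2 - a2)) (a3 + l * (b3 - a3)).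
Proof. unfold seg; vec_ring. Qed.

Lemma vdot_lpt_sub x0 e1 e2 nu a1 a2 a3 b1 b2 b3 :
  orthonormal3 e1 e2 (vopp nu) ->
  let w := vsub (lpt x0 e1 e2 nu a1 a2 a3) (lpt x0 e1 e2 nu b1 b2 b3) in
  vdot w w = (a1 - b1) ^ 2 + (a2 - b2) ^ 2 + (a3 - b3) ^ 2.
Proof.
  intros (h1 & h2 & h3 & h4 & h5 & h6) w.
  replace (vdot w w) with
    ((a1 - b1) ^ 2 * vdot e1 e1 + (a2 - b2) ^ 2 * vdot e2 e2
     + (a3 - b3) ^ 2 * vdot (vopp nu) (vopp nu)
     + 2 * (a1 - b1) * (a2 - b2) * vdot e1 e2
     + 2 * (a1 - b1) * (a3 - b3) * vdot e1 (vopp nu)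
     + 2 * (a2 - b2) * (a3 - b3) * vdot e2 (vopp nu)) by (unfold w; vec_ring).
  rewrite h1, h2, h3, h4, h5, h6. ring.
Qed.

Lemma vdist_lpt_lt x0 e1 e2 nu a1 a2 a3 b1 b2 b3 r :
  orthonormal3 e1 e2 (vopp nu) -> 0 < r ->
  vdist (lpt x0 e1 e2 nu a1 a2 a3) (lpt x0 e1 e2 nu b1 b2 b3) < r <->
  (a1 - b1) ^ 2 + (a2 - b2) ^ 2 + (a3 - b3) ^ 2 < r * r.
Proof. intros Ho Hr. rewrite vdist_lt_sqr by exact Hr. now rewrite vdot_lpt_sub. Qed.

Lemma vdist_lpt_origin_lt x0 e1 e2 nu a1 a2 a3 r :
  orthonormal3 e1 e2 (vopp nu) -> 0 < r ->
  vdist (lpt x0 e1 e2 nu a1 a2 a3) x0 < r <-> a1 ^ 2 + a2 ^ 2 + a3 ^ 2 < r * r.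
Proof.
  intros Ho Hr. rewrite <- (lpt_origin x0 e1 e2 nu) at 2.
  rewrite vdist_lpt_lt by assumption. now rewrite !Rminus_0_r.
Qed.

Definition far_from_bdry (Om : set3) (eps : R) : set3 :=
  fun x => Om x /\ ~ near_bdry Om eps x.

Lemma far_from_bdry_dist Om eps x b :
  far_from_bdry Om eps x -> bdry Om b -> eps <= vdist x b.
Proof.
  intros [Hx Hfar] Hb. apply Rnot_lt_le. intro Hlt.
  apply Hfar. split; [exact Hx | now exists b].
Qed.

Section Chart.

Variables (Om : set3) (d : R) (x0 e1 e2 nu : vec3) (phi : R -> R -> R).
Hypothesis d_gt0 : 0 < d.
Hypothesis frame : orthonormal3 e1 e2 (vopp nu).
Hypothesis phi_lip : forall a1 a2 b1 b2,
  Rabs (phi a1 a2 - phi b1 b2) <= (Rabs (a1 - b1) + Rabs (a2 - b2)) / 100.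
Hypothesis phi00 : phi 0 0 = 0.
Hypothesis graph : graph_in Om (oball x0 (3 * d)) x0 e1 e2 nu phi.

Local Notation pt := (lpt x0 e1 e2 nu).
Local Notation K := (far_from_bdry Om (d / 8)).

Lemma phi_abs_le u1 u2 : Rabs (phi u1 u2) <= (Rabs u1 + Rabs u2) / 100.
Proof. pose proof (phi_lip u1 u2 0 0) as H. now rewrite phi00, !Rminus_0_r in H. Qed.

Lemma chart_in_ball u1 u2 u3 r :
  0 < r -> r <= 3 * d -> u1 ^ 2 + u2 ^ 2 + u3 ^ 2 < r * r -> oball x0 (3 * d) (pt u1 u2 u3).
Proof.
  intros Hr Hrd Hu. unfold oball. apply Rlt_le_trans with r; [|exact Hrd].
  now apply vdist_lpt_origin_lt.
Qed.

Lemma chart_coords x : Om x -> vdist x x0 < 3 * d ->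
  exists u1 u2 u3, x = pt u1 u2 u3 /\ phi u1 u2 < u3.
Proof. intros Hx Hball. now apply (proj2 graph x Hball). Qed.

Lemma chart_Om u1 u2 s :
  u1 ^ 2 + u2 ^ 2 + s ^ 2 < (2 * d) * (2 * d) -> phi u1 u2 < s -> Om (pt u1 u2 s).
Proof.
  intros Hu Hs. apply (proj2 graph); [apply (chart_in_ball _ _ _ (2 * d)); lra|].
  now exists u1, u2, s.
Qed.

Lemma chart_bdry_near u1 u2 s b :
  u1 ^ 2 + u2 ^ 2 + s ^ 2 < (2 * d) * (2 * d) -> bdry Om b -> vdist (pt u1 u2 s) b < d / 8 ->
  exists v1 v2, b = pt v1 v2 (phi v1 v2) /\
    (u1 - v1) ^ 2 + (u2 - v2) ^ 2 + (s - phi v1 v2) ^ 2 < d / 8 * (d / 8) /\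
    Rabs (phi v1 v2 - phi u1 u2) <= d / 400.
Proof.
  intros Hu Hb Hnear.
  assert (Hball : oball x0 (3 * d) b).
  { unfold oball. pose proof (vdist_triangle b (pt u1 u2 s) x0).
    pose proof (proj2 (vdist_lpt_origin_lt x0 e1 e2 nu u1 u2 s (2 * d) frame ltac:(lra)) Hu).
    rewrite vdist_sym in Hnear. lra. }
  destruct (proj1 (proj1 graph b Hball) Hb) as [v1 [v2 ->]].
  apply vdist_lpt_lt in Hnear; [|exact frame | lra].
  exists v1, v2. split; [reflexivity|]. split; [exact Hnear|].
  pose proof (pow2_ge_0 (u1 - v1)); pose proof (pow2_ge_0 (u2 - v2)).
  pose proof (pow2_ge_0 (s - phi v1 v2)).
  assert (Rabs (v1 - u1) < d / 8).
  { apply Rabs_lt_of_sqr_lt; [lra|]. replace ((v1 - u1) ^ 2) with ((u1 - v1) ^ 2) by ring. lra. }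
  assert (Rabs (v2 - u2) < d / 8).
  { apply Rabs_lt_of_sqr_lt; [lra|]. replace ((v2 - u2) ^ 2) with ((u2 - v2) ^ 2) by ring. lra. }
  pose proof (phi_lip v1 v2 u1 u2). lra.
Qed.

Lemma high_far_from_bdry u1 u2 s :
  u1 ^ 2 + u2 ^ 2 + s ^ 2 < (2 * d) * (2 * d) -> d / 7 <= s - phi u1 u2 -> K (pt u1 u2 s).
Proof.
  intros Hu Hs. split; [apply chart_Om; lra|].
  intros [_ [b [Hb Hnear]]].
  destruct (chart_bdry_near u1 u2 s b Hu Hb Hnear) as [v1 [v2 [_ [Hv Hphi]]]].
  pose proof (pow2_ge_0 (u1 - v1)); pose proof (pow2_ge_0 (u2 - v2)).
  pose proof (Rle_abs (phi v1 v2 - phi u1 u2)).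
  assert (d / 8 < s - phi v1 v2) by lra.
  nra.
Qed.

Lemma far_from_bdry_gap u1 u2 u3 :
  K (pt u1 u2 u3) -> phi u1 u2 < u3 -> u1 ^ 2 + u2 ^ 2 + u3 ^ 2 < (2 * d) * (2 * d) ->
  d / 8 <= u3 - phi u1 u2.
Proof.
  intros Hy Hph Hu.
  pose proof (pow2_ge_0 u1); pose proof (pow2_ge_0 u2); pose proof (pow2_ge_0 u3).
  assert (Rabs u1 < 2 * d) by (apply Rabs_lt_of_sqr_lt; lra).
  assert (Rabs u2 < 2 * d) by (apply Rabs_lt_of_sqr_lt; lra).
  pose proof (phi_abs_le u1 u2) as Hphi.
  assert (Hb : bdry Om (pt u1 u2 (phi u1 u2))).
  { apply (proj1 graph); [|now exists u1, u2].
    apply (chart_in_ball _ _ _ (3 * d)); try lra.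
    pose proof (pow2_abs (phi u1 u2)). pose proof (Rabs_pos (phi u1 u2)). nra. }
  pose proof (far_from_bdry_dist _ _ _ _ Hy Hb) as Hfar.
  apply Rnot_lt_le. intro Hlt. apply (Rle_not_lt _ _ Hfar).
  apply vdist_lpt_lt; [exact frame | lra |].
  replace ((u1 - u1) ^ 2 + (u2 - u2) ^ 2 + (u3 - phi u1 u2) ^ 2)
    with ((u3 - phi u1 u2) ^ 2) by ring.
  nra.
Qed.

Lemma raise_far_from_bdry u1 u2 u3 s :
  K (pt u1 u2 u3) -> phi u1 u2 < u3 -> u1 ^ 2 + u2 ^ 2 + u3 ^ 2 < (2 * d) * (2 * d) ->
  u3 <= s -> u1 ^ 2 + u2 ^ 2 + s ^ 2 < (2 * d) * (2 * d) -> K (pt u1 u2 s).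
Proof.
  intros Hy Hph Hu Hs Hus.
  pose proof (far_from_bdry_gap u1 u2 u3 Hy Hph Hu) as Hgap.
  split; [apply chart_Om; lra|].
  intros [_ [b [Hb Hnear]]].
  destruct (chart_bdry_near u1 u2 s b Hus Hb Hnear) as [v1 [v2 [-> [Hv Hphi]]]].
  pose proof (Rle_abs (phi v1 v2 - phi u1 u2)).
  assert (Hbelow : phi v1 v2 < u3) by lra.
  apply (Rle_not_lt _ _ (far_from_bdry_dist _ _ _ _ Hy Hb)).
  apply vdist_lpt_lt; [exact frame | lra |]. nra.
Qed.

Lemma joined_to_top y : K y -> vdist y x0 < d -> joined K y (pt 0 0 d).
Proof.
  intros Hy Hyx.
  destruct (chart_coords y (proj1 Hy) ltac:(lra)) as [u1 [u2 [u3 [-> Hph]]]].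
  apply vdist_lpt_origin_lt in Hyx; [|exact frame|exact d_gt0].
  pose proof (pow2_ge_0 u1); pose proof (pow2_ge_0 u2); pose proof (pow2_ge_0 u3).
  assert (Hu3 : Rabs u3 < d) by (apply Rabs_lt_of_sqr_lt; lra).
  apply Rabs_def2 in Hu3.
  apply joined_trans with (pt u1 u2 d); apply joined_seg; intros l Hl; rewrite seg_lpt.
  - replace (u1 + l * (u1 - u1)) with u1 by ring.
    replace (u2 + l * (u2 - u2)) with u2 by ring.
    assert (Hs : u3 <= u3 + l * (d - u3) <= d) by nra.
    apply (raise_far_from_bdry u1 u2 u3); try tauto; nra.
  - set (w1 := u1 + l * (0 - u1)); set (w2 := u2 + l * (0 - u2)).
    replace (d + l * (d - d)) with d by ring.
    assert (Hw : w1 ^ 2 + w2 ^ 2 <= u1 ^ 2 + u2 ^ 2).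
    { unfold w1, w2. replace (u1 + l * (0 - u1)) with ((1 - l) * u1) by ring.
      replace (u2 + l * (0 - u2)) with ((1 - l) * u2) by ring.
      assert (0 <= (1 - l) ^ 2 <= 1) by nra. nra. }
    pose proof (pow2_ge_0 w1); pose proof (pow2_ge_0 w2).
    assert (Rabs w1 < d) by (apply Rabs_lt_of_sqr_lt; lra).
    assert (Rabs w2 < d) by (apply Rabs_lt_of_sqr_lt; lra).
    pose proof (phi_abs_le w1 w2). pose proof (Rle_abs (phi w1 w2)).
    apply high_far_from_bdry; lra.
Qed.

Lemma chart_close_to_far_from_bdry x :
  Om x -> vdist x x0 < d / 4 -> exists y, K y /\ vdist x y < d / 7.
Proof.
  intros Hx Hxx.
  destruct (chart_coords x Hx ltac:(lra)) as [u1 [u2 [u3 [-> Hph]]]].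
  apply vdist_lpt_origin_lt in Hxx; [|exact frame|lra].
  pose proof (pow2_ge_0 u1); pose proof (pow2_ge_0 u2); pose proof (pow2_ge_0 u3).
  assert (Rabs u1 < d / 4) by (apply Rabs_lt_of_sqr_lt; lra).
  assert (Rabs u2 < d / 4) by (apply Rabs_lt_of_sqr_lt; lra).
  assert (Hphi : Rabs (phi u1 u2) < d / 200) by (pose proof (phi_abs_le u1 u2); lra).
  apply Rabs_def2 in Hphi.
  destruct (Rle_lt_dec (d / 7) (u3 - phi u1 u2)) as [Hhigh|Hlow].
  - exists (pt u1 u2 u3). split; [apply high_far_from_bdry; nra|].
    rewrite vdist_xx. lra.
  - exists (pt u1 u2 (phi u1 u2 + d / 7)). split.
    + apply high_far_from_bdry; [|lra].
      assert (Rabs (phi u1 u2 + d / 7) < d / 4).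
      { apply Rabs_def1; lra. }
      pose proof (pow2_abs (phi u1 u2 + d / 7)). pose proof (Rabs_pos (phi u1 u2 + d / 7)). nra.
    + apply vdist_lpt_lt; [exact frame | lra |]. nra.
Qed.

End Chart.

Definition bdry_charts (Om : set3) (d : R) : Prop :=
  forall b, bdry Om b -> exists (x0 e1 e2 nu : vec3) (phi : R -> R -> R),
    vdist b x0 < d / 8 /\ orthonormal3 e1 e2 (vopp nu) /\
    (forall a1 a2 b1 b2,
       Rabs (phi a1 a2 - phi b1 b2) <= (Rabs (a1 - b1) + Rabs (a2 - b2)) / 100) /\
    phi 0 0 = 0 /\ graph_in Om (oball x0 (3 * d)) x0 e1 e2 nu phi.

Lemma local_chart_cover_charts Om d : local_chart_cover Om d -> bdry_charts Om d.
Proof.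
  intros (m1 & x0 & e1 & e2 & nu & phi & _ & Hcover & Hcharts) b Hb.
  destruct (Hcover b Hb) as [i [Hi Hbi]].
  destruct (Hcharts i Hi) as (Ho & HC2 & H00 & _ & _ & Hgrad & Hgraph & _).
  exists (x0 i), (e1 i), (e2 i), (nu i), (phi i).
  split; [exact Hbi|]. split; [exact Ho|]. split; [|split; assumption].
  intros a1 a2 b1 b2.
  replace ((Rabs (a1 - b1) + Rabs (a2 - b2)) / 100)
    with (1 / 100 * (Rabs (a1 - b1) + Rabs (a2 - b2))) by field.
  apply lipschitz_of_partials_bound; [apply HC2 | intros; now apply Rlt_le].
Qed.

Lemma close_to_far_from_bdry Om d x :
  0 < d -> bdry_charts Om d -> Om x ->
  exists y, far_from_bdry Om (d / 8) y /\ vdist x y < d / 7.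
Proof.
  intros Hd Hcharts Hx.
  destruct (classic (near_bdry Om (d / 8) x)) as [[_ [b [Hb Hxb]]]|Hfar].
  - destruct (Hcharts b Hb) as (x0 & e1 & e2 & nu & phi & Hbx & Ho & Hlip & H00 & Hgraph).
    apply (chart_close_to_far_from_bdry Om d x0 e1 e2 nu phi); try assumption.
    pose proof (vdist_triangle x b x0). lra.
  - exists x. split; [split; assumption|]. rewrite vdist_xx. lra.
Qed.

Lemma joined_far_from_bdry_seg Om eps y y' :
  0 < eps -> far_from_bdry Om eps y ->
  (forall b, bdry Om b -> eps + vdist y y' <= vdist y b) ->
  joined (far_from_bdry Om eps) y y'.
Proof.
  intros Heps Hy Hfar. apply joined_seg. intros l Hl.
  pose proof (vdist_seg_le y y' l Hl) as Hz.
  split.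
  - apply NNPP. intro Hout.
    destruct (seg_meets_bdry Om y (seg y y' l) (proj1 Hy) Hout) as [l' [Hl' Hb]].
    pose proof (vdist_seg_le y (seg y y' l) l' Hl'). pose proof (Hfar _ Hb). lra.
  - intros [_ [b [Hb Hzb]]]. pose proof (Hfar _ Hb).
    pose proof (vdist_triangle y (seg y y' l) b). lra.
Qed.

Lemma far_from_bdry_locally_joined Om d y y' :
  0 < d -> bdry_charts Om d ->
  far_from_bdry Om (d / 8) y -> far_from_bdry Om (d / 8) y' -> vdist y y' < 2 * (d / 7) ->
  joined (far_from_bdry Om (d / 8)) y y'.
Proof.
  intros Hd Hcharts Hy Hy' Hyy.
  destruct (classic (forall b, bdry Om b -> d / 8 + vdist y y' <= vdist y b)) as [Hfar|Hnear].
  { apply joined_far_from_bdry_seg; lra || assumption. }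
  apply not_all_ex_not in Hnear as [b Hb].
  apply imply_to_and in Hb as [Hb Hyb]. apply Rnot_le_lt in Hyb.
  destruct (Hcharts b Hb) as (x0 & e1 & e2 & nu & phi & Hbx & Ho & Hlip & H00 & Hgraph).
  pose proof (vdist_triangle y b x0). pose proof (vdist_triangle y' y x0).
  rewrite (vdist_sym y' y) in *.
  apply joined_trans with (lpt x0 e1 e2 nu 0 0 d);
    [|apply joined_sym]; apply (joined_to_top Om d x0 e1 e2 nu phi); auto; lra.
Qed.

Lemma open3_nbhd (P : set3) r : open3 (fun w => exists y, P y /\ vdist w y < r).
Proof.
  intros w [y [Py Hwy]]. exists (r - vdist w y). split; [lra|].
  intros z Hz. exists y. split; [exact Py|]. pose proof (vdist_triangle z w y). lra.
Qed.

Lemma joined_of_chain_connected (Om K : set3) r :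
  connected3 Om -> 0 < r -> (forall x, K x -> Om x) ->
  (forall x, Om x -> exists y, K y /\ vdist x y < r) ->
  (forall y y', K y -> K y' -> vdist y y' < 2 * r -> joined K y y') ->
  forall x1 x2, K x1 -> K x2 -> joined K x1 x2.
Proof.
  intros Hconn Hr HKOm Hdense Hlocal x1 x2 K1 K2.
  apply NNPP. intro Hno. apply Hconn.
  exists (fun w => exists y, (K y /\ joined K x1 y) /\ vdist w y < r),
         (fun w => exists y, (K y /\ ~ joined K x1 y) /\ vdist w y < r).
  split; [apply open3_nbhd|]. split; [apply open3_nbhd|].
  split; [|split; [|split]].
  - intros x Hx. destruct (Hdense x Hx) as [y [Ky Hxy]].
    destruct (classic (joined K x1 y)); [left | right]; exists y; tauto.
  - exists x1. split; [now apply HKOm|]. exists x1.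
    rewrite vdist_xx. split; [split; [|apply joined_refl]; assumption | exact Hr].
  - exists x2. split; [now apply HKOm|]. exists x2.
    rewrite vdist_xx. split; [split; assumption | exact Hr].
  - intros w _ [y [[Ky Jy] Hwy]] [y' [[Ky' nJy'] Hwy']]. apply nJy'.
    apply joined_trans with y; [exact Jy|]. apply Hlocal; try assumption.
    pose proof (vdist_triangle y w y'). rewrite (vdist_sym y w) in *. lra.
Qed.

Theorem lemma2p5 (Om : set3) (delta d : R) :
  open3 Om -> connected3 Om -> bounded3 Om -> C2_boundary Om ->
  is_delta Om delta ->
  0 < d -> d < Rmin 1 delta ->
  path_connected (fun x => Om x /\ ~ near_bdry Om (d / 8) x).
Proof.
  intros _ Hconn _ _ [_ Hdelta] Hd Hdmin.
  assert (Hcharts : bdry_charts Om d) by now apply local_chart_cover_charts, Hdelta.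
  intros x1 x2 H1 H2.
  apply (joined_of_chain_connected Om (far_from_bdry Om (d / 8)) (d / 7)); try assumption.
  - lra.
  - now intros x [Hx _].
  - intros x Hx. now apply close_to_far_from_bdry.
  - intros y y' Hy Hy' Hyy. now apply far_from_bdry_locally_joined.
Qed.
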